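(* For all integers $r\ge 0$: \begin{align*} \mathrm{LCD}[6r+3,2] &= 4r+2,\\ \mathrm{LCD}[6r+4,2] &= 4r+2,\\ \mathrm{LCD}[6r+5,2] &= 4r+2,\\ \mathrm{LCD}[6r+6,2] &= 4r+3,\\ \mathrm{LCD}[6r+7,2] &= 4r+4,\\ \mathrm{LCD}[6r+8,2] &= 4r+5. \end{align*} Equivalently, for all integers $r\ge 0$ and $s\in\{3,4,5,6,7,8\}$, \[\mathrm{LCD}[6r+s,2]=4r+\left\lfloor\frac{s}{6}\right\rfloor\bigl(1+(s \bmod 6)\bigr)+2.\]
   Context: All codes are binary linear codes, i.e. subspaces of $\mathbb{F}_2^n$; an $[n,k,d]$ code is one of length $n$, dimension $k$ and minimum Hamming distance $d$. A linear code $C$ is an LCD code (linear code with complementary dual) if $C\cap C^\perp=\{0\}$, where $C^\perp$ is the dual with respect to the standard dot product. For positive integers $n\ge k$, $\mathrm{LCD}[n,k]$ denotes the largest $d$ such that there exists a binary $[n,k,d]$ LCD code. *)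

From mathcomp Require Import all_boot all_algebra.
Set Implicit Arguments. Unset Strict Implicit. Unset Printing Implicit Defensive.
Import GRing.Theory.
Local Open Scope ring_scope.

(* A binary linear code of length n is a subspace of F_2^n, represented as the
   row space of a matrix C : 'M['F_2]_n (mxalgebra's representation of subspaces). *)

Definition wt n (v : 'rV['F_2]_n) : nat := #|[set i : 'I_n | v 0 i != 0]|.

Definition hdist n (u v : 'rV['F_2]_n) : nat := #|[set i : 'I_n | u 0 i != v 0 i]|.

Definition dual_code n (C : 'M['F_2]_n) : 'M['F_2]_n := kermx C^T.

Definition is_LCD n (C : 'M['F_2]_n) : bool := \rank (C :&: dual_code C)%MS == 0%N.

Definition has_min_dist n (C : 'M['F_2]_n) (d : nat) : Prop :=
  (exists u v : 'rV['F_2]_n, [/\ (u <= C)%MS, (v <= C)%MS, u != v & hdist u v = d]) /\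
  (forall u v : 'rV['F_2]_n, (u <= C)%MS -> (v <= C)%MS -> u != v -> (d <= hdist u v)%N).

Definition LCD_exists (n k d : nat) : Prop :=
  exists C : 'M['F_2]_n, [/\ \rank C = k, is_LCD C & has_min_dist C d].

Definition LCD_value (n k d : nat) : Prop :=
  LCD_exists n k d /\ (forall d', LCD_exists n k d' -> (d' <= d)%N).

From mathcomp Require Import all_boot all_algebra zify ring.
Set Implicit Arguments. Unset Strict Implicit. Unset Printing Implicit Defensive.
Import GRing.Theory.
Local Open Scope ring_scope.

(* A binary code of dimension 2 is determined, up to a permutation of the
   coordinates, by the numbers x, y, z of columns (1,0), (0,1), (1,1) of a
   generator matrix M.  Its nonzero codewords have weights x + z, y + z and
   x + y, and det (M M^T) = xy + yz + zx, so by Massey's criterion (a code is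
   LCD iff the Gram matrix of a generator is invertible) it is LCD iff at
   least two of x, y, z are odd.  LCD[n,2] is therefore the maximum of
   min(x + z, y + z, x + y) over x + y + z <= n under this parity condition,
   a small integer program that linear arithmetic solves for each residue
   of n modulo 6. *)

Section GramCriterion.
Variable F : fieldType.

Lemma kermx_tr_subS m1 m2 n (A : 'M[F]_(m1, n)) (B : 'M[F]_(m2, n)) :
  (A <= B)%MS -> (kermx B^T <= kermx A^T)%MS.
Proof.
by case/submxP=> X ->; apply/sub_kermxP; rewrite trmx_mul mulmxA mulmx_ker mul0mx.
Qed.

Lemma cap_kermx_tr_eqmx m1 m2 n (A : 'M[F]_(m1, n)) (B : 'M[F]_(m2, n)) :
  (A :=: B)%MS -> (A :&: kermx A^T :=: B :&: kermx B^T)%MS.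
Proof.
move=> eqAB; apply: cap_eqmx => //; apply/eqmxP.
by rewrite !kermx_tr_subS // eqAB.
Qed.

Lemma row_base_rank m n (C : 'M[F]_(m, n)) k :
  \rank C = k -> exists2 M : 'M[F]_(k, n), (M :=: C)%MS & row_free M.
Proof. by move<-; exists (row_base C); [apply: eq_row_base | apply: row_base_free]. Qed.

Lemma gram_unit_row_free m n (M : 'M[F]_(m, n)) :
  M *m M^T \in unitmx -> row_free M.
Proof.
move=> unitG; rewrite /row_free eqn_leq rank_leq_row.
by rewrite -{1}(mxrank_unit unitG) mxrankM_maxl.
Qed.

Lemma cap_kermx_tr_eq0 m n (M : 'M[F]_(m, n)) : row_free M ->
  (\rank (M :&: kermx M^T)%MS == 0%N) = (M *m M^T \in unitmx).
Proof.
move=> freeM; rewrite mxrank_eq0 -row_free_unit; apply/idP/idP => [/eqP cap0 | freeG].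
  rewrite -kermx_eq0 -(mulmx_free_eq0 _ freeM) -submx0 -cap0 sub_capmx submxMl /=.
  by apply/sub_kermxP; rewrite -mulmxA mulmx_ker.
have /submxP[P defD] := capmxSl M (kermx M^T).
have /sub_kermxP := capmxSr M (kermx M^T).
rewrite defD -mulmxA => /eqP; rewrite mulmx_free_eq0 // => /eqP->.
by rewrite mul0mx.
Qed.

End GramCriterion.

Lemma det_mx2 (R : comNzRingType) (A : 'M[R]_2) :
  \det A = A 0 0 * A 1 1 - A 0 1 * A 1 0.
Proof.
rewrite (expand_det_row _ 0) big_ord_recl big_ord1 /cofactor !det_mx11 !mxE /=.
have -> : lift 0 0 = 1 :> 'I_2 by apply: val_inj.
have -> : lift 1 0 = 0 :> 'I_2 by apply: val_inj.
by rewrite expr0 expr1 mul1r mulN1r mulrN.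
Qed.

Lemma mul_rV2 (R : pzSemiRingType) n (p : 'rV[R]_2) (A : 'M[R]_(2, n)) k :
  (p *m A) 0 k = p 0 0 * A 0 k + p 0 1 * A 1 k.
Proof.
rewrite mxE big_ord_recl big_ord1.
by have -> : lift ord0 ord0 = 1 :> 'I_2 by apply: val_inj.
Qed.

Lemma rV2_eq0 (R : nmodType) (p : 'rV[R]_2) : (p == 0) = (p 0 0 == 0) && (p 0 1 == 0).
Proof.
apply/eqP/andP => [-> | [/eqP p0 /eqP p1]]; first by rewrite !mxE.
apply/rowP => -[[|[|//]] i]; rewrite mxE; [rewrite -p0 | rewrite -p1].
all: by congr (p _ _); apply: val_inj.
Qed.

Lemma natmulE (a c : nat) : a *+ c = (a * c)%N.
Proof. by rewrite -mulr_natr natn natrME. Qed.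

Lemma card_nth (T : Type) (x0 : T) (s : seq T) (P : pred T) n :
  size s = n -> #|[set k : 'I_n | P (nth x0 s k)]| = count P s.
Proof. by move<-; rewrite -sum1dep_card -sum1_count (big_nth x0) big_mkord. Qed.

Lemma F2_cases (t : 'F_2) : t = 0 \/ t = 1.
Proof. by case: t => [[|[|]]] // ?; [left|right]; apply: val_inj. Qed.

Lemma F2_natr_eq0 m : ((m%:R : 'F_2) == 0) = ~~ odd m.
Proof. by rewrite -(Zp_nat_mod (isT : (1 < 2)%N)) modn2; case: (odd m). Qed.

Lemma hdist_wt n (u v : 'rV['F_2]_n) : hdist u v = wt (u - v).
Proof. by apply: eq_card => i; rewrite !inE !mxE subr_eq0. Qed.

Lemma has_min_distP n m (C : 'M['F_2]_n) (M : 'M['F_2]_(m, n)) d :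
  (M :=: C)%MS -> row_free M ->
  has_min_dist C d <->
  (exists2 p, p != 0 & wt (p *m M) = d) /\ (forall p, p != 0 -> (d <= wt (p *m M))%N).
Proof.
move=> eqMC freeM; have inC p : (p *m M <= C)%MS by rewrite -eqMC submxMl.
have codeword_neq0 p : (p *m M != 0) = (p != 0) by rewrite mulmx_free_eq0.
split=> [[[u [v [uC vC uv <-]]] dmin] | [[p p0 <-] dmin]]; split.
- move: uC vC uv; rewrite -!eqMC => /submxP[p ->] /submxP[q ->] pq.
  exists (p - q); last by rewrite hdist_wt mulmxBl.
  by rewrite -codeword_neq0 mulmxBl subr_eq0.
- by move=> p p0; rewrite -[p *m M]subr0 -hdist_wt dmin ?inC ?sub0mx ?codeword_neq0.
- by exists (p *m M), 0; rewrite ?inC ?sub0mx ?codeword_neq0 ?hdist_wt ?subr0.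
- move=> u v; rewrite -!eqMC => /submxP[q ->] /submxP[r ->] qr.
  by rewrite hdist_wt -mulmxBl dmin // subr_eq0; apply: contraNneq qr => ->.
Qed.

Definition min_pair_sum (x y z : nat) : nat := minn (x + z) (minn (y + z) (x + y)).

Lemma odd_pair_prods x y z :
  odd (x * y + y * z + z * x) = (2 <= odd x + odd y + odd z)%N.
Proof. by rewrite !oddD !oddM; case: (odd x); case: (odd y); case: (odd z). Qed.

Section TwoRowGenerator.
Variables (n : nat) (M : 'M['F_2]_(2, n)).

Definition col_count (c : 'F_2 * 'F_2) : nat := #|[set k | (M 0 k, M 1 k) == c]|.

Local Notation x := (col_count (1, 0)).
Local Notation y := (col_count (0, 1)).
Local Notation z := (col_count (1, 1)).
Local Notation w := (col_count (0, 0)).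

Lemma sum_by_col_type (V : nmodType) (G : 'F_2 * 'F_2 -> V) :
  \sum_k G (M 0 k, M 1 k) = G (1, 0) *+ x + G (0, 1) *+ y + G (1, 1) *+ z + G (0, 0) *+ w.
Proof.
rewrite /col_count -!sum1dep_card ![\sum_(k | _) 1%N]big_mkcond -!sumrMnr.
rewrite -!big_split /=; apply: eq_bigr => k _.
by case: (F2_cases (M 0 k)) => ->; case: (F2_cases (M 1 k)) => ->;
  rewrite ?mulr1n ?mulr0n ?addr0 ?add0r.
Qed.

Lemma col_count_sum : (x + y + z + w)%N = n.
Proof. by have := sum_by_col_type (fun=> 1%N); rewrite sum1_card card_ord !natn. Qed.

Lemma wt_mulmx (p : 'rV['F_2]_2) :
  wt (p *m M) = ((p 0 0 != 0)%R * x + (p 0 1 != 0)%R * y + (p 0 0 + p 0 1 != 0)%R * z)%N.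
Proof.
have := sum_by_col_type (fun c => nat_of_bool (p 0 0 * c.1 + p 0 1 * c.2 != 0)).
rewrite /= !mulr1 !mulr0 !addr0 !add0r eqxx mul0rn addr0 !natmulE !natrDE => <-.
by rewrite /wt -sum1dep_card big_mkcond; apply: eq_bigr => k _; rewrite mul_rV2.
Qed.

Lemma min_pair_sum_le_wt p : p != 0 -> (min_pair_sum x y z <= wt (p *m M))%N.
Proof.
rewrite rV2_eq0 wt_mulmx /min_pair_sum.
by case: (F2_cases (p 0 0)) => ->; case: (F2_cases (p 0 1)) => -> //= _; lia.
Qed.

Lemma wt_eq_min_pair_sum : exists2 p, p != 0 & wt (p *m M) = min_pair_sum x y z.
Proof.
have : min_pair_sum x y z = (x + z)%N \/ min_pair_sum x y z = (y + z)%N \/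
       min_pair_sum x y z = (x + y)%N by rewrite /min_pair_sum; lia.
case=> [->|[->|->]]; [exists (delta_mx 0 0) | exists (delta_mx 0 1) | exists (const_mx 1)].
all: by rewrite ?rV2_eq0 ?wt_mulmx !mxE //=; lia.
Qed.

Lemma gram_det : \det (M *m M^T) = (x * y + y * z + z * x)%:R.
Proof.
have gramE i j (G : 'F_2 * 'F_2 -> 'F_2) :
    (forall k, M i k * M j k = G (M 0 k, M 1 k)) ->
    (M *m M^T) i j = G (1, 0) *+ x + G (0, 1) *+ y + G (1, 1) *+ z + G (0, 0) *+ w.
  by move=> eG; rewrite -sum_by_col_type mxE; apply: eq_bigr => k _; rewrite mxE eG.
rewrite det_mx2 (gramE 0 0 (fun c => c.1 * c.1)) // (gramE 1 1 (fun c => c.2 * c.2)) //.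
rewrite (gramE 0 1 (fun c => c.1 * c.2)) // (gramE 1 0 (fun c => c.2 * c.1)) //=.
rewrite !(mulr1, mulr0, mul0r, mul0rn, addr0, add0r) !natrD !natrM.
ring.
Qed.

Variable C : 'M['F_2]_n.
Hypotheses (eqMC : (M :=: C)%MS) (freeM : row_free M).

Lemma is_LCD_two_rows : is_LCD C = odd (x * y + y * z + z * x).
Proof.
rewrite /is_LCD /dual_code -(cap_kermx_tr_eqmx eqMC) cap_kermx_tr_eq0 //.
by rewrite unitmxE unitfE gram_det F2_natr_eq0 negbK.
Qed.

Lemma has_min_dist_two_rows d : has_min_dist C d <-> d = min_pair_sum x y z.
Proof.
rewrite (has_min_distP _ eqMC freeM); split=> [[[p p0 <-] dmin] | ->].
  have [q /dmin le_d eq_q] := wt_eq_min_pair_sum.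
  by apply/eqP; rewrite eqn_leq -{1}eq_q le_d min_pair_sum_le_wt.
by split; [apply: wt_eq_min_pair_sum | apply: min_pair_sum_le_wt].
Qed.

End TwoRowGenerator.

Definition gen_of_cols n (s : seq ('F_2 * 'F_2)) : 'M['F_2]_(2, n) :=
  \matrix_(i, k) (if i == 0 then (nth (0, 0) s k).1 else (nth (0, 0) s k).2).

Lemma col_count_gen_of_cols n s c :
  size s = n -> col_count (gen_of_cols n s) c = count_mem c s.
Proof.
move=> size_s; rewrite /col_count -(card_nth (0, 0) _ size_s).
by apply: eq_card => k; rewrite !inE !mxE /=; case: (nth _ _ _).
Qed.

Lemma LCD_exists_dim2P n d :
  LCD_exists n 2 d <->
  exists x y z, [/\ (x + y + z <= n)%N, odd (x * y + y * z + z * x) & d = min_pair_sum x y z].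
Proof.
split=> [[C [rankC lcdC distC]] | [x [y [z [le_n lcd ->]]]]].
  have [M eqMC freeM] := row_base_rank rankC.
  exists (col_count M (1, 0)), (col_count M (0, 1)), (col_count M (1, 1)); split.
  - by rewrite -[X in (_ <= X)%N](col_count_sum M) leq_addr.
  - by rewrite -(is_LCD_two_rows eqMC freeM).
  - exact/(has_min_dist_two_rows eqMC freeM).
pose s : seq ('F_2 * 'F_2) :=
  nseq x (1, 0) ++ nseq y (0, 1) ++ nseq z (1, 1) ++ nseq (n - (x + y + z)) (0, 0).
have size_s : size s = n by rewrite !size_cat !size_nseq; lia.
pose M := gen_of_cols n s.
have counts c : col_count M c = count_mem c s by apply: col_count_gen_of_cols.
have [cx cy cz] : [/\ col_count M (1, 0) = x, col_count M (0, 1) = y & col_count M (1, 1) = z].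
  by rewrite !counts !count_cat !count_nseq /=; split; lia.
have eqMC : (M :=: <<M>>)%MS by apply: eqmx_sym; apply: genmxE.
have unitG : M *m M^T \in unitmx by rewrite unitmxE unitfE gram_det cx cy cz F2_natr_eq0 lcd.
have freeM := gram_unit_row_free unitG.
exists <<M>>%MS; split.
- by rewrite mxrank_gen; apply/eqP.
- by rewrite (is_LCD_two_rows eqMC freeM) cx cy cz.
- by apply/(has_min_dist_two_rows eqMC freeM); rewrite cx cy cz.
Qed.

Local Close Scope ring_scope.

Lemma LCD_value_dim2 x y z n D :
  x + y + z <= n -> 2 <= odd x + odd y + odd z -> D = min_pair_sum x y z ->
  (forall a b c, a + b + c <= n -> 2 <= odd a + odd b + odd c -> min_pair_sum a b c <= D) ->
  LCD_value n 2 D.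
Proof.
rewrite -odd_pair_prods => le_n lcd defD maxD; split.
  by apply/LCD_exists_dim2P; exists x, y, z.
move=> d /LCD_exists_dim2P[a [b [c [le_abc]]]]; rewrite odd_pair_prods => lcd_abc ->.
exact: maxD.
Qed.

Theorem theorem2p6 (r : nat) :
  LCD_value (6 * r + 3) 2 (4 * r + 2) /\
  LCD_value (6 * r + 4) 2 (4 * r + 2) /\
  LCD_value (6 * r + 5) 2 (4 * r + 2) /\
  LCD_value (6 * r + 6) 2 (4 * r + 3) /\
  LCD_value (6 * r + 7) 2 (4 * r + 4) /\
  LCD_value (6 * r + 8) 2 (4 * r + 5).
Proof.
split; [|split; [|split; [|split; [|split]]]].
- apply: (@LCD_value_dim2 (2 * r + 1) (2 * r + 1) (2 * r + 1));
    rewrite /min_pair_sum => *; lia.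
- apply: (@LCD_value_dim2 (2 * r + 1) (2 * r + 1) (2 * r + 1));
    rewrite /min_pair_sum => *; lia.
- apply: (@LCD_value_dim2 (2 * r + 1) (2 * r + 1) (2 * r + 1));
    rewrite /min_pair_sum => *; lia.
- apply: (@LCD_value_dim2 (2 * r + 3) (2 * r + 2) (2 * r + 1));
    rewrite /min_pair_sum => *; lia.
- apply: (@LCD_value_dim2 (2 * r + 3) (2 * r + 3) (2 * r + 1));
    rewrite /min_pair_sum => *; lia.
- apply: (@LCD_value_dim2 (2 * r + 3) (2 * r + 3) (2 * r + 2));
    rewrite /min_pair_sum => *; lia.
Qed.
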